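(* For any networked common goods game in which the utility function $U_j$ of every agent $a_j$ is increasing, concave and differentiable, a pure strategy Nash equilibrium exists.
   Context: A networked common goods game (NCGG) is given by a finite bipartite graph $G=(P,A,E)$ with goods $P=\{p_1,\dots,p_n\}$ and agents $A=\{a_1,\dots,a_m\}$ (an edge $(p_i,a_j)\in E$ means agent $a_j$ is entitled to good $p_i$), ground levels $\alpha_i\ge 0$ for each good $p_i$, and for each agent $a_j$ a utility function $U_j:[0,\infty)\to\mathbb{R}$ with $U_j(0)=0$. $N(v)$ denotes the set of neighbours of a vertex $v$. Each agent owns one unit of a divisible resource; a strategy of $a_j$ is a vector $(x_{ij})_{p_i\in N(a_j)}$ with $x_{ij}\ge 0$ and $\sum_{p_i\in N(a_j)}x_{ij}\le 1$. For a strategy profile, the total resource of good $p_i$ is $W_i=\alpha_i+\sum_{a_k\in N(p_i)}x_{ik}$, and the payoff of $a_j$ is $\sum_{p_i\in N(a_j)}U_j(W_i)$. A pure strategy Nash equilibrium is a profile in which no agent can strictly increase her payoff by unilaterally changing her strategy. *)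

From HB Require Import structures.
From mathcomp Require Import all_boot all_order all_algebra.
From mathcomp Require Import all_classical all_reals all_analysis.
Set Implicit Arguments. Unset Strict Implicit. Unset Printing Implicit Defensive.
Import Order.TTheory GRing.Theory Num.Theory.
Import numFieldNormedType.Exports.
Local Open Scope classical_set_scope.
Local Open Scope ring_scope.

(* Goods: finType P, agents: finType A, bipartite edge relation
   E : P -> A -> bool (E i j  <->  agent a_j is entitled to good p_i).  Utilities U : A -> R -> R (only values on
   [0, +oo) are relevant; see the hypotheses of the theorem).
   A strategy of agent j is represented as a function s : P -> R vanishing
   outside N(a_j); a strategy profile is x : A -> P -> R. *)

Section NCGG.
Variables (R : realType) (P A : finType) (E : P -> A -> bool).
Variables (alpha : P -> R) (U : A -> R -> R).

Definition is_strategy (j : A) (s : P -> R) : Prop :=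
  [/\ forall i, 0 <= s i,
      forall i, ~~ E i j -> s i = 0
    & \sum_(i | E i j) s i <= 1].

Definition is_profile (x : A -> P -> R) : Prop :=
  forall j, is_strategy j (x j).

Definition total_resource (x : A -> P -> R) (i : P) : R :=
  alpha i + \sum_(k | E i k) x k i.

Definition payoff (x : A -> P -> R) (j : A) : R :=
  \sum_(i | E i j) U j (total_resource x i).

Definition deviate (x : A -> P -> R) (j : A) (s : P -> R) : A -> P -> R :=
  fun k => if k == j then s else x k.

Definition pure_nash_equilibrium (x : A -> P -> R) : Prop :=
  is_profile x /\
  forall j s, is_strategy j s -> payoff (deviate x j s) j <= payoff x j.

End NCGG.

Definition increasing_on_nonneg (R : realType) (u : R -> R) : Prop :=
  forall x y : R, 0 <= x -> x < y -> u x < u y.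

Definition concave_on_nonneg (R : realType) (u : R -> R) : Prop :=
  forall (x y t : R), 0 <= x -> 0 <= y -> 0 <= t -> t <= 1 ->
    t * u x + (1 - t) * u y <= u (t * x + (1 - t) * y).

Definition differentiable_on_nonneg (R : realType) (u : R -> R) : Prop :=
  (forall x : R, 0 < x -> derivable u x 1) /\
  cvg ((fun h : R => h^-1 * (u h - u 0)) @ 0^'+).

From mathcomp Require Import all_boot all_order all_algebra.
From mathcomp Require Import all_classical all_reals all_analysis.
From mathcomp Require Import ring lra.
Set Implicit Arguments. Unset Strict Implicit. Unset Printing Implicit Defensive.
Import Order.TTheory GRing.Theory Num.Theory.
Import numFieldNormedType.Exports.
Local Open Scope classical_set_scope.
Local Open Scope ring_scope.

(* The game has the potential Phi(x) = sum_i W_i^2, which attains its minimum on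
   the compact set of profiles in which every agent spends its whole unit.  At a
   minimizer every agent only feeds goods of minimal total resource m among its
   own goods, since moving a little resource from a fuller good to an emptier one
   lowers Phi.  Such a water-filling profile is an equilibrium: a deviation only
   lowers goods from level m and raises goods from levels >= m, so by concavity
   the change of every term of the payoff is at most sigma times the change of
   resource, for one nonnegative chord slope sigma of U_j ending at m, and the
   changes of resource add up to at most zero. *)

Section ConcaveSlope.
Variables (R : realType) (u : R -> R).
Hypothesis u_concave : concave_on_nonneg u.

Definition slope (a b : R) := (u b - u a) / (b - a).

Lemma slopeP a b : a != b -> u b - u a = slope a b * (b - a).
Proof. by move=> ab; rewrite /slope divfK // subr_eq0 eq_sym. Qed.

Lemma concave_three_chords x y z : 0 <= x -> x < y -> y < z ->
  (z - y) * u x + (y - x) * u z <= (z - x) * u y.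
Proof.
move=> x0 xy yz; have zx : 0 < z - x by lra.
pose t := (z - y) / (z - x).
have t0 : 0 <= t by rewrite divr_ge0 //; lra.
have t1 : t <= 1 by rewrite ler_pdivrMr //; lra.
have := u_concave x0 (_ : 0 <= z) t0 t1.
have -> : t * x + (1 - t) * z = y by rewrite /t; field; lra.
have -> : (z - y) * u x + (y - x) * u z = (z - x) * (t * u x + (1 - t) * u z).
  by rewrite /t; field; lra.
by move=> /(_ ltac:(lra)); rewrite ler_pM2l.
Qed.

Lemma slope_shrink_right x y z : 0 <= x -> x < y -> y < z ->
  slope x z <= slope x y.
Proof.
move=> x0 xy yz; have := concave_three_chords x0 xy yz.
rewrite /slope ler_pdivrMr; last lra.
rewrite mulrAC ler_pdivlMr; [nra | lra].
Qed.

Lemma slope_shrink_left x y z : 0 <= x -> x < y -> y < z ->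
  slope y z <= slope x z.
Proof.
move=> x0 xy yz; have := concave_three_chords x0 xy yz.
rewrite /slope ler_pdivrMr; last lra.
rewrite mulrAC ler_pdivlMr; [nra | lra].
Qed.

Lemma concave_slope_nonincr a b c d : 0 <= a -> a < b -> c < d ->
  a <= c -> b <= d -> slope c d <= slope a b.
Proof.
move=> a0 ab cd ac bd; have ad : a < d by lra.
have slope_ad : slope a d <= slope a b.
  by case: (ltrgtP b d) bd => // [bd' _ | -> _]; [exact: slope_shrink_right|].
apply: le_trans slope_ad.
by case: (ltrgtP a c) ac => // [ac' _ | <- _]; [exact: slope_shrink_left|].
Qed.

Lemma concave_increment_le a m W d : 0 <= a -> a < m ->
  (0 <= d -> m <= W) -> (d < 0 -> W = m /\ 0 <= m + d <= a) ->
  u (W + d) - u W <= slope a m * d.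
Proof.
move=> a0 am up down.
case: (ltgtP d 0) => [d_lt0 | d_gt0 | ->]; last by rewrite addr0 subrr mulr0.
- have [-> /andP[md0 mda]] := down d_lt0.
  rewrite -opprB slopeP; last by apply/eqP; lra.
  rewrite -mulrN opprB addrC addrK ler_wnM2r //; first exact: ltW.
  by apply: concave_slope_nonincr => //; lra.
- have mW := up (ltW d_gt0).
  rewrite slopeP; last by apply/eqP; lra.
  rewrite addrC addrK ler_wpM2r //; first exact: ltW.
  by apply: concave_slope_nonincr => //; lra.
Qed.

Lemma increasing_slope_ge0 a b : increasing_on_nonneg u -> 0 <= a -> a < b ->
  0 <= slope a b.
Proof.
by move=> u_incr a0 ab; rewrite divr_ge0 // subr_ge0 ltW // u_incr.
Qed.

End ConcaveSlope.

Section BestResponse.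
Variables (R : realType) (I : finType) (Q : pred I) (u : R -> R).
Hypotheses (u_concave : concave_on_nonneg u) (u_incr : increasing_on_nonneg u).
Variables (W x s : I -> R).
Hypotheses (s_ge0 : forall i, Q i -> 0 <= s i)
  (x_le_W : forall i, Q i -> x i <= W i)
  (sum_s_le : \sum_(i | Q i) s i <= \sum_(i | Q i) x i).

Lemma concave_deviation_le m : 0 < m ->
  (forall i, Q i -> m <= W i) -> (forall i, Q i -> 0 < x i -> W i = m) ->
  \sum_(i | Q i) u (W i + (s i - x i)) <= \sum_(i | Q i) u (W i).
Proof.
move=> m_gt0 W_ge_m W_eq_m.
pose a := \big[Num.max/0]_(i | Q i && (s i < x i)) (W i + (s i - x i)).
have a_ge0 : 0 <= a by exact: bigmax_ge_id.
have a_lt_m : a < m.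
  apply: bigmax_lt => // i /andP[Qi sx].
  by rewrite W_eq_m //; [lra | exact: le_lt_trans (s_ge0 Qi) sx].
rewrite -subr_le0 -sumrB.
apply: (le_trans (y := \sum_(i | Q i) slope u a m * (s i - x i))).
  apply: ler_sum => i Qi; apply: concave_increment_le => // [d_ge0|d_lt0].
    exact: W_ge_m.
  have sx : s i < x i by lra.
  have Wm := W_eq_m i Qi (le_lt_trans (s_ge0 Qi) sx).
  split => //; rewrite -Wm le_bigmax_cond ?Qi ?sx // andbT.
  by have := x_le_W Qi; have := s_ge0 Qi; lra.
rewrite -mulr_sumr sumrB mulr_ge0_le0 ?subr_le0 //.
exact: increasing_slope_ge0.
Qed.

Lemma waterfilling_best_response :
  (forall i, Q i -> 0 <= x i) ->
  (forall i i', Q i -> Q i' -> 0 < x i -> W i <= W i') ->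
  \sum_(i | Q i) u (W i + (s i - x i)) <= \sum_(i | Q i) u (W i).
Proof.
move=> x_ge0 waterfill.
case: (pickP (fun i => Q i && (0 < x i))) => [i0 /andP[Qi0 xi0] | x_eq0].
  apply: (concave_deviation_le (m := W i0)) => [|i Qi|i Qi xi].
  - exact: lt_le_trans xi0 (x_le_W Qi0).
  - exact: waterfill.
  - by apply/eqP; rewrite eq_le !waterfill.
have {}x_eq0 i : Q i -> x i = 0.
  move=> Qi; move: (x_eq0 i); rewrite Qi /= => /negbT; rewrite -leNgt.
  by have := x_ge0 i Qi; lra.
have sum_s_eq0 : \sum_(i | Q i) s i = 0.
  apply/eqP; rewrite eq_le sumr_ge0 // andbT.
  by rewrite (le_trans sum_s_le) // big1.
have s_eq0 := psumr_eq0P s_ge0 sum_s_eq0.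
by apply: ler_sum => i Qi; rewrite x_eq0 // s_eq0 // subrr addr0.
Qed.

End BestResponse.

Lemma sum_indicator (R : nzRingType) (I : finType) (Q : pred I) (i : I) :
  \sum_(l | Q l) (l == i)%:R = (Q i)%:R :> R.
Proof.
case Qi: (Q i).
  by rewrite (bigD1 i) //= eqxx big1 ?addr0 // => l /andP[_ /negbTE ->].
by rewrite big1 // => l Ql; case: eqP Ql => // ->; rewrite Qi.
Qed.

Section Game.
Variables (R : realType) (P A : finType) (E : P -> A -> bool) (alpha : P -> R).
Hypothesis alpha_ge0 : forall i, 0 <= alpha i.

Local Notation W := (total_resource E alpha).

Definition budget (j : A) : R := if [exists i, E i j] then 1 else 0.

Definition full_budget (x : A -> P -> R) : Prop :=
  [/\ forall j i, 0 <= x j i, forall j i, ~~ E i j -> x j i = 0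
    & forall j, \sum_(i | E i j) x j i = budget j].

Definition waterfilling (x : A -> P -> R) : Prop :=
  forall j i i', E i j -> E i' j -> 0 < x j i -> W x i <= W x i'.

Lemma strategy_sum_le_budget j s : is_strategy E j s ->
  \sum_(i | E i j) s i <= budget j.
Proof.
case=> _ _ sum_le1; rewrite /budget; case: existsP => // no_good.
by rewrite big_pred0 // => i; apply/negP => Eij; apply: no_good; exists i.
Qed.

Lemma full_budget_profile x : full_budget x -> is_profile E x.
Proof.
case=> x_ge0 x_off sum_x j; split=> [i | i |]; first exact: x_ge0.
  exact: x_off.
by rewrite sum_x /budget; case: ifP.
Qed.

Lemma full_budget_exists : exists x, full_budget x.
Proof.
exists (fun k i => if [pick l | E l k] is Some l then (i == l)%:R else 0); split.
- by move=> k i; case: pickP.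
- by move=> k i Eik; case: pickP => // l Elk; case: eqVneq Eik => // ->; rewrite Elk.
- move=> k; rewrite /budget; case: pickP => [l Elk | no_good].
    by rewrite sum_indicator Elk; case: existsP => // -[]; exists l.
  rewrite big1 => [|i]; last by rewrite no_good.
  by case: existsP => // -[i]; rewrite no_good.
Qed.

Lemma full_budget_bounded x j i : full_budget x -> 0 <= x j i <= 1.
Proof.
case=> x_ge0 x_off sum_x; rewrite x_ge0 /=.
case Eij: (E i j); last by rewrite x_off ?Eij.
apply: le_trans (_ : budget j <= 1); last by rewrite /budget; case: ifP.
by rewrite -sum_x (bigD1 i) //= lerDl sumr_ge0.
Qed.

Lemma alloc_le_total_resource x j i : (forall k, 0 <= x k i) -> E i j ->
  x j i <= W x i.
Proof.
move=> x_ge0 Eij; rewrite /total_resource (bigD1 j) //= addrCA lerDl.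
by rewrite addr_ge0 ?sumr_ge0.
Qed.

Lemma total_resource_deviate x j s i : E i j ->
  W (deviate x j s) i = W x i + (s i - x j i).
Proof.
move=> Eij; rewrite /total_resource (bigD1 j) // [in RHS](bigD1 j) //=.
rewrite /deviate eqxx (eq_bigr (fun k => x k i)); last first.
  by move=> k /andP[_ /negbTE ->].
ring.
Qed.

Lemma waterfilling_nash (U : A -> R -> R) x :
  (forall j, concave_on_nonneg (U j)) -> (forall j, increasing_on_nonneg (U j)) ->
  full_budget x -> waterfilling x -> pure_nash_equilibrium E alpha U x.
Proof.
move=> U_concave U_incr x_full x_wf; split; first exact: full_budget_profile.
case: x_full => x_ge0 _ sum_x j s s_strat.
rewrite /payoff; under eq_bigr => i Eij do rewrite total_resource_deviate //.
apply: waterfilling_best_response => [|| i _ | i Eij | | i _ |].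
- exact: U_concave.
- exact: U_incr.
- by case: s_strat.
- exact: alloc_le_total_resource.
- by rewrite sum_x; exact: strategy_sum_le_budget.
- exact: x_ge0.
- exact: x_wf.
Qed.

Definition potential (x : A -> P -> R) : R := \sum_i W x i ^+ 2.

Definition transfer (x : A -> P -> R) j i i' d : A -> P -> R :=
  fun k l => x k l + (k == j)%:R * d * ((l == i')%:R - (l == i)%:R).

Section Transfer.
Variables (x : A -> P -> R) (j : A) (i i' : P) (d : R).
Hypotheses (Eij : E i j) (Ei'j : E i' j).

Lemma total_resource_transfer l :
  W (transfer x j i i' d) l = W x l + d * ((l == i')%:R - (l == i)%:R).
Proof.
rewrite /total_resource /transfer big_split /= -mulr_suml -mulr_suml.
rewrite sum_indicator addrA; congr (_ + _).
case Elj: (E l j); first by rewrite mul1r.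
have [li li'] : l != i /\ l != i'.
  by split; apply: contraFneq Elj => ->.
by rewrite (negbTE li) (negbTE li') subrr !mulr0.
Qed.

Lemma full_budget_transfer : i != i' -> 0 <= d <= x j i ->
  full_budget x -> full_budget (transfer x j i i' d).
Proof.
move=> ii' /andP[d_ge0 d_le] [x_ge0 x_off sum_x]; split.
- move=> k l; rewrite /transfer; case: (eqVneq k j) => [->|_]; last first.
    by rewrite !mul0r addr0.
  case: (eqVneq l i) => [->|li]; first by rewrite (negbTE ii') mul1r sub0r mulrN1; lra.
  rewrite /= subr0 mul1r; have := x_ge0 j l.
  by case: (l == i') => /=; nra.
- move=> k l Elk; rewrite /transfer x_off //.
  case: (eqVneq k j) => [kj|_]; last by rewrite mul0r mul0r add0r.
  have [-> ->] : l == i' = false /\ l == i = false.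
    by split; apply/negbTE; apply: contraNneq Elk => ->; rewrite kj.
  by rewrite subrr mulr0 add0r.
- move=> k; rewrite /transfer big_split /= -mulr_sumr sumrB !sum_indicator.
  case: (eqVneq k j) => [->|_]; first by rewrite Eij Ei'j subrr mulr0 addr0.
  by rewrite mul0r mul0r addr0.
Qed.

Lemma potential_transfer : i != i' ->
  potential (transfer x j i i' d) = potential x + 2 * d * (W x i' - W x i + d).
Proof.
move=> ii'.
have split_sum (f : P -> R) :
    \sum_l f l = f i + f i' + \sum_(l | (l != i) && (l != i')) f l.
  by rewrite (bigD1 i) //= (bigD1 i') 1?eq_sym //= addrA.
rewrite /potential !split_sum (eq_bigr (fun l => W x l ^+ 2)); last first.
  move=> l /andP[li li']; rewrite total_resource_transfer.
  by rewrite (negbTE li) (negbTE li') subrr mulr0 addr0.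
rewrite !total_resource_transfer eqxx (negbTE ii') eq_sym (negbTE ii') eqxx.
rewrite /= subr0 sub0r; ring.
Qed.

End Transfer.

Lemma potential_min_waterfilling x : full_budget x ->
  (forall y, full_budget y -> potential x <= potential y) -> waterfilling x.
Proof.
move=> x_full x_min j i i' Eij Ei'j x_pos; rewrite leNgt; apply/negP => W_lt.
have ii' : i != i' by apply: contraTneq W_lt => ->; rewrite ltxx.
pose d := Num.min (x j i) ((W x i - W x i') / 2).
have d_gt0 : 0 < d by rewrite lt_min x_pos /= divr_gt0 // subr_gt0.
have d_le_x : d <= x j i by rewrite ge_min lexx.
have d_le_gap : d <= (W x i - W x i') / 2.
  by rewrite ge_min lexx orbT.
have d_range : 0 <= d <= x j i by rewrite d_le_x ltW.
have := x_min _ (full_budget_transfer (d := d) Eij Ei'j ii' d_range x_full).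
rewrite potential_transfer // -subr_ge0 addrAC subrr add0r.
by rewrite pmulr_rge0 ?mulr_gt0 //; lra.
Qed.

End Game.

Lemma closed_preimage_forall (T U : topologicalType) (I : Type)
    (f : I -> T -> U) (D : I -> set U) :
  (forall i, continuous (f i)) -> (forall i, closed (D i)) ->
  closed [set t | forall i, D i (f i t)].
Proof.
move=> f_cont D_closed.
have -> : [set t | forall i, D i (f i t)] = \bigcap_(i in setT) (f i @^-1` D i).
  by apply/seteqP; split=> t /= t_in i; [move=> _ |]; exact: t_in.
by apply: closed_bigI => i _; apply: preimage_closed => // t _; exact: f_cont.
Qed.

Lemma continuous_sum (R : realType) (T : topologicalType) (I : Type) (r : seq I)
    (Q : pred I) (f : I -> T -> R) :
  (forall i, continuous (f i)) -> continuous (fun t => \sum_(i <- r | Q i) f i t).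
Proof.
by move=> f_cont; apply: continuous_big => [|i _]; [exact: add_continuous|].
Qed.

Section Minimizer.
Import ArrowAsProduct.
Variables (R : realType) (P A : finType) (E : P -> A -> bool) (alpha : P -> R).

(* Profiles are optimized as functions on [A * P], which carry the product
   topology. *)
Definition profile_of (v : A * P -> R) : A -> P -> R := fun k i => v (k, i).

Lemma coord_continuous (p : A * P) : continuous (fun v : A * P -> R => v p).
Proof. exact: (@proj_continuous _ (fun _ => R) p). Qed.

Lemma continuous_potential :
  continuous (fun v => potential E alpha (profile_of v)).
Proof.
apply: continuous_sum => i.
pose Wi v := total_resource E alpha (profile_of v) i.
have Wi_cont : continuous Wi.
  move=> v; apply: (continuousD (f := fun=> alpha i)
    (g := fun v : A * P -> R => \sum_(k | E i k) v (k, i))).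
    exact: cst_continuous.
  by apply: continuous_sum => k; exact: coord_continuous.
have -> : (fun v => Wi v ^+ 2) = Wi \* Wi by apply: funext => v; rewrite expr2.
by move=> v; apply: continuousM; exact: Wi_cont.
Qed.

Lemma full_budget_closed : closed [set v | full_budget E (profile_of v)].
Proof.
have -> : [set v | full_budget E (profile_of v)] =
    [set v | forall p, [set y | 0 <= y] (v p)] `&`
    [set v | forall p, [set y | ~~ E p.2 p.1 -> y = 0] (v p)] `&`
    [set v | forall k, [set y | y = budget R E k] (\sum_(i | E i k) v (k, i))].
  apply/seteqP; split=> v /=.
    case=> v_ge0 v_off sum_v; split; first split.
    - by case=> k i; exact: v_ge0.
    - by case=> k i; exact: v_off.
    - exact: sum_v.
  case=> -[v_ge0 v_off] sum_v; split=> [k i | k i | k].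
  - exact: (v_ge0 (k, i)).
  - exact: (v_off (k, i)).
  - exact: sum_v.
have coord_closed (D : A * P -> set R) : (forall p, closed (D p)) ->
    closed [set v : A * P -> R | forall p, D p (v p)].
  move=> D_closed; apply: (closed_preimage_forall (f := fun p v => v p)) => //.
  exact: coord_continuous.
apply: closedI; first apply: closedI.
- by apply: (coord_closed (fun=> [set y | 0 <= y])) => p; exact: closed_ge.
- apply: (coord_closed (fun p => [set y | ~~ E p.2 p.1 -> y = 0])) => p.
  case: (E p.2 p.1) => /=.
    by rewrite (_ : [set y | false -> y = 0] = setT) //; apply/seteqP; split.
  rewrite (_ : [set y | true -> y = 0] = [set y | y = 0]); first exact: closed_eq.
  by apply/seteqP; split=> y /=; [apply | move=> ->].
- apply: (closed_preimage_forall (f := fun k v => \sum_(i | E i k) v (k, i))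
    (D := fun k => [set y | y = budget R E k])).
    by move=> k; apply: continuous_sum => i; exact: coord_continuous.
  by move=> k; exact: closed_eq.
Qed.

Lemma full_budget_compact : compact [set v | full_budget E (profile_of v)].
Proof.
apply: subclosed_compact full_budget_closed
  (tychonoff (fun _ : A * P => @segment_compact R 0 1)) _.
by move=> v /full_budget_bounded v_box [k i]; rewrite /= in_itv /=; exact: v_box.
Qed.

Lemma full_budget_minimizer : exists x, full_budget E x /\
  forall y, full_budget E y -> potential E alpha x <= potential E alpha y.
Proof.
have nonempty : [set v | full_budget E (profile_of v)] !=set0.
  by have [x x_full] := @full_budget_exists R P A E; exists (fun p => x p.1 p.2).
have [v] := compact_EVT_min nonempty full_budget_compact
  (continuous_subspaceT continuous_potential).
rewrite inE => v_full v_min; exists (profile_of v); split=> // y y_full.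
by apply: (v_min (fun p => y p.1 p.2)); rewrite inE.
Qed.

End Minimizer.

Theorem theorem4 (R : realType) (P A : finType) (E : P -> A -> bool)
    (alpha : P -> R) (U : A -> R -> R) :
  (forall i, 0 <= alpha i) ->
  (forall j, U j 0 = 0) ->
  (forall j, increasing_on_nonneg (U j)) ->
  (forall j, concave_on_nonneg (U j)) ->
  (forall j, differentiable_on_nonneg (U j)) ->
  exists x : A -> P -> R, pure_nash_equilibrium E alpha U x.
Proof.
move=> alpha_ge0 _ U_incr U_concave _.
have [x [x_full x_min]] := full_budget_minimizer E alpha.
exists x; apply: (waterfilling_nash alpha_ge0 U_concave U_incr x_full).
exact: potential_min_waterfilling x_full x_min.
Qed.
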